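(* In the setting below, let $\varepsilon_0$ and $\lambda_p=\lambda_p(\nu_0,\varepsilon)$ be as in the following fact: there exist $C_0>0$, $\nu_0>1$, $0<\varepsilon_0\le\delta_0$ such that for every $p$ and $0<\varepsilon\le\varepsilon_0$ there is $\lambda_p$ with, for all $\lambda\ge\lambda_p$ and $\sigma=\sum\alpha_i\delta_{a_i}\in B_p(\partial M)$, $\mathcal{E}_g(f_p(\lambda)(\sigma))\le p^{2/n}\mathcal{Y}(S^n_+)$ if some $\alpha_{i_0}/\alpha_{j_0}>\nu_0$ or $\sum_{i\ne j}\varepsilon_{i,j}>\varepsilon$, and $\mathcal{E}_g(f_p(\lambda)(\sigma))\le p^{2/n}\mathcal{Y}(S^n_+)(1+C_0\lambda^{2-n}-c_g(p-1)\lambda^{2-n})$ otherwise. Then there exists $p_0\in\mathbb{N}^*$ such that for every $0<\varepsilon\le\varepsilon_0$ and every $\lambda\ge\lambda_{p_0}$, $f_{p_0}(\lambda)(B_{p_0}(\partial M))\subset W_{p_0-1}$.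
   Context: Setting as follows. $(\overline M,g)$ compact, dimension $n\ge6$, $\partial M$ totally geodesic, $\mathcal{Y}(M,\partial M,g)>0$; $\mathcal{E}_g$ the boundary Yamabe functional $\frac{\langle L_gu,u\rangle_{L^2(M)}+\langle B_gu,u\rangle_{L^2(\partial M)}}{(\int_Mu^{2n/(n-2)}dV_g)^{(n-2)/n}}$ on $W^{1,2}_+(\overline M)=\{u\in W^{1,2}(\overline M):u>0\}$, with $L_g=-4\frac{n-1}{n-2}\Delta_g+R_g$, $B_g=\frac{4(n-1)}{n-2}\partial_{n_g}+2(n-1)H_g$; $\mathcal{Y}(S^n_+)$ the Yamabe invariant of the round hemisphere. For $p\in\mathbb{N}$, $W_p=\{u\in W^{1,2}_+(\overline M):\mathcal{E}_g(u)\le(p+1)^{2/n}\mathcal{Y}(S^n_+)\}$. $G$ is the normalized Green's function of $(L_g,B_g)$; $c_1=\int_{\mathbb{R}^n_+}(1+|x|^2)^{-n}dx$, $c_3=\int_{\mathbb{R}^n_+}(1+|x|^2)^{-\frac{n+2}2}dx$, $c_g=\frac{c_3}{4c_1}\min_{x\ne y\in\partial M}G(x,y)>0$, $\varepsilon_{i,j}=c_3(2+\lambda^2G(a_i,a_j)^{\frac2{2-n}})^{-\frac{n-2}2}$. $B_p(\partial M)$ is the set of formal barycenters $\sum_{i=1}^p\alpha_i\delta_{a_i}$ ($a_i\in\partial M$, $\alpha_i\ge0$, $\sum\alpha_i=1$), and $f_p(\lambda)(\sum\alpha_i\delta_{a_i})=\sum\alpha_i\varphi_{a_i,\lambda}$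 where $\varphi_{a,\lambda}=u_av_{a,1/\lambda,\lambda^{-2/n}}$ is the conformally rescaled Brendle–Chen bubble centered at $a\in\partial M$ (defined for $\lambda\ge2\delta_0^{-n/2}$, $\delta_0>0$ a fixed small constant). *)

From Stdlib Require Import Reals List.
Open Scope R_scope.

Definition sumR (p : nat) (g : nat -> R) : R :=
  fold_right Rplus 0 (map g (seq 0 p)).

(* (alpha_0,...,alpha_{p-1}) are the weights of a formal barycenter in B_p *)
Definition is_bary (p : nat) (alpha : nat -> R) : Prop :=
  (forall i, (i < p)%nat -> 0 <= alpha i) /\ sumR p alpha = 1.

(* f_p(lambda)(sum alpha_i delta_{a_i}) = sum alpha_i phi_{a_i,lambda} *)
Definition fp {Mty Bd : Type} (phi : Bd -> R -> Mty -> R) (p : nat) (lam : R)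
  (a : nat -> Bd) (alpha : nat -> R) : Mty -> R :=
  fun x => sumR p (fun i => alpha i * phi (a i) lam x).

Definition eps_ij {Bd : Type} (n : nat) (c3 : R) (G : Bd -> Bd -> R) (lam : R)
  (ai aj : Bd) : R :=
  c3 * Rpower (2 + lam ^ 2 * Rpower (G ai aj) (2 / (2 - INR n)))
              (- (INR n - 2) / 2).

Definition sum_offdiag (p : nat) (e : nat -> nat -> R) : R :=
  sumR p (fun i => sumR p (fun j => if Nat.eqb i j then 0 else e i j)).

(* "some alpha_{i0}/alpha_{j0} > nu0  or  sum_{i<>j} eps_{i,j} > eps" ;
   the ratio condition is written alpha_{i0} > nu0 * alpha_{j0}
   (ratio = +infinity when alpha_{j0} = 0 < alpha_{i0}). *)
Definition far_cond {Bd : Type} (n : nat) (c3 : R) (G : Bd -> Bd -> R)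
  (nu0 eps lam : R) (p : nat) (a : nat -> Bd) (alpha : nat -> R) : Prop :=
  (exists i0 j0, (i0 < p)%nat /\ (j0 < p)%nat /\ alpha i0 > nu0 * alpha j0)
  \/ sum_offdiag p (fun i j => eps_ij n c3 G lam (a i) (a j)) > eps.

Definition inW {Mty : Type} (W12 : (Mty -> R) -> Prop) (E : (Mty -> R) -> R)
  (n : nat) (Y : R) (p : nat) (u : Mty -> R) : Prop :=
  W12 u /\ (forall x, 0 < u x) /\ E u <= Rpower (INR p + 1) (2 / INR n) * Y.

From Stdlib Require Import Reals List Lra Lia Psatz Classical.
Open Scope R_scope.

(* First, for p0 - 1 >= C0 / cg the interaction gain
   cg (p0 - 1) lambda^(2-n) beats the error C0 lambda^(2-n), so in the
   "near" case the energy bound collapses to p0^(2/n) Y, which is the bound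
   given outright in the "far" case; and p0^(2/n) Y is the threshold of
   W_(p0-1). Second, f_p0(lambda)(sigma) is a convex combination of positive
   bubbles lying in W^{1,2}, hence itself positive and in W^{1,2}. *)

Lemma Rpower_pos (x y : R) : 0 < Rpower x y.
Proof. apply exp_pos. Qed.

Definition sumL (l : list nat) (g : nat -> R) : R :=
  fold_right Rplus 0 (map g l).

Lemma sumL_ge0 (l : list nat) (g : nat -> R) :
  (forall i, In i l -> 0 <= g i) -> 0 <= sumL l g.
Proof.
  induction l as [|i l IH]; cbn; intros Hg; [lra|].
  assert (0 <= g i) by (apply Hg; left; reflexivity).
  assert (0 <= sumL l g) by (apply IH; intros j Hj; apply Hg; right; exact Hj).
  unfold sumL in *; lra.
Qed.

Lemma sumL_weighted_pos (l : list nat) (alpha f : nat -> R) :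
  (forall i, In i l -> 0 <= alpha i) -> (forall i, In i l -> 0 < f i) ->
  0 < sumL l alpha -> 0 < sumL l (fun i => alpha i * f i).
Proof.
  induction l as [|i l IH]; cbn; intros Ha Hf Hsum; [lra|].
  assert (Hai : 0 <= alpha i) by (apply Ha; left; reflexivity).
  assert (Hfi : 0 < f i) by (apply Hf; left; reflexivity).
  assert (Ha' : forall j, In j l -> 0 <= alpha j) by (intros j Hj; apply Ha; right; exact Hj).
  assert (Hf' : forall j, In j l -> 0 < f j) by (intros j Hj; apply Hf; right; exact Hj).
  assert (Htail : 0 <= sumL l (fun j => alpha j * f j)).
  { apply sumL_ge0; intros j Hj. pose proof (Ha' j Hj); pose proof (Hf' j Hj); nra. }
  fold (sumL l alpha) in Hsum; fold (sumL l (fun j => alpha j * f j)).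
  destruct (Rlt_dec 0 (sumL l alpha)) as [Hpos|Hzero].
  - pose proof (IH Ha' Hf' Hpos); nra.
  - assert (0 < alpha i) by lra; nra.
Qed.

Lemma sumL_combination_closed {T : Type} (W : (T -> R) -> Prop)
  (HW0 : W (fun _ => 0))
  (HWadd : forall u v, W u -> W v -> W (fun x => u x + v x))
  (HWscal : forall c u, W u -> W (fun x => c * u x))
  (l : list nat) (alpha : nat -> R) (h : nat -> T -> R) :
  (forall i, In i l -> W (h i)) ->
  W (fun x => sumL l (fun i => alpha i * h i x)).
Proof.
  induction l as [|i l IH]; cbn; intros Hh; [exact HW0|].
  apply (HWadd (fun x => alpha i * h i x) (fun x => sumL l (fun j => alpha j * h j x))).
  - apply HWscal, Hh; left; reflexivity.
  - apply IH; intros j Hj; apply Hh; right; exact Hj.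
Qed.

Lemma fp_pos {Mty Bd : Type} (phi : Bd -> R -> Mty -> R) (p : nat) (lam : R)
  (a : nat -> Bd) (alpha : nat -> R) :
  is_bary p alpha -> (forall i, (i < p)%nat -> forall x, 0 < phi (a i) lam x) ->
  forall x, 0 < fp phi p lam a alpha x.
Proof.
  intros [Halpha Hsum] Hphi x.
  apply (sumL_weighted_pos _ alpha (fun i => phi (a i) lam x)).
  - intros i Hi; apply Halpha; apply in_seq in Hi; lia.
  - intros i Hi; apply Hphi; apply in_seq in Hi; lia.
  - unfold sumL; unfold sumR in Hsum; lra.
Qed.

Lemma fp_closed {Mty Bd : Type} (W : (Mty -> R) -> Prop)
  (HW0 : W (fun _ => 0))
  (HWadd : forall u v, W u -> W v -> W (fun x => u x + v x))
  (HWscal : forall c u, W u -> W (fun x => c * u x))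
  (phi : Bd -> R -> Mty -> R) (p : nat) (lam : R) (a : nat -> Bd) (alpha : nat -> R) :
  (forall i, (i < p)%nat -> W (phi (a i) lam)) -> W (fp phi p lam a alpha).
Proof.
  intros Hphi.
  apply (sumL_combination_closed W HW0 HWadd HWscal _ alpha (fun i => phi (a i) lam)).
  intros i Hi; apply Hphi; apply in_seq in Hi; lia.
Qed.

Lemma correction_absorbed (A K c L : R) :
  0 <= A -> 0 <= L -> K <= c -> A * (1 + K * L - c * L) <= A.
Proof. intros HA HL HKc. assert (K * L - c * L <= 0) by nra. nra. Qed.

Lemma exists_gain_dominates (C cg : R) :
  0 < cg -> exists p : nat, (1 <= p)%nat /\ C <= cg * (INR p - 1).
Proof.
  intros Hcg. destruct (INR_archimed cg C Hcg) as [N HN].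
  exists (S N); split; [lia|].
  rewrite S_INR; lra.
Qed.

Theorem corollary3p3
  (n : nat) (Mty Bd : Type)
  (W12 : (Mty -> R) -> Prop) (E : (Mty -> R) -> R) (Y : R)
  (G : Bd -> Bd -> R) (c3 cg delta0 : R) (phi : Bd -> R -> Mty -> R)
  (Hn : (6 <= n)%nat) (HY : 0 < Y) (Hc3 : 0 < c3) (Hcg : 0 < cg)
  (Hdelta0 : 0 < delta0)
  (HW0 : W12 (fun _ => 0))
  (HWadd : forall u v, W12 u -> W12 v -> W12 (fun x => u x + v x))
  (HWscal : forall c u, W12 u -> W12 (fun x => c * u x))
  (Hphi : forall b lam, 2 * Rpower delta0 (- INR n / 2) <= lam ->
            W12 (phi b lam) /\ (forall x, 0 < phi b lam x))
  (C0 nu0 eps0 : R) (lamp : nat -> R -> R)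
  (HC0 : 0 < C0) (Hnu0 : 1 < nu0) (Heps0 : 0 < eps0 <= delta0)
  (Hfact : forall (p : nat) (eps : R), 0 < eps <= eps0 ->
      2 * Rpower delta0 (- INR n / 2) <= lamp p eps /\
      forall lam, lamp p eps <= lam ->
      forall (a : nat -> Bd) (alpha : nat -> R), is_bary p alpha ->
        (far_cond n c3 G nu0 eps lam p a alpha ->
           E (fp phi p lam a alpha) <= Rpower (INR p) (2 / INR n) * Y) /\
        (~ far_cond n c3 G nu0 eps lam p a alpha ->
           E (fp phi p lam a alpha) <= Rpower (INR p) (2 / INR n) * Y *
             (1 + C0 * Rpower lam (2 - INR n)
                - cg * (INR p - 1) * Rpower lam (2 - INR n)))) :
  exists p0 : nat, (1 <= p0)%nat /\
    forall eps, 0 < eps <= eps0 ->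
    forall lam, lamp p0 eps <= lam ->
    forall (a : nat -> Bd) (alpha : nat -> R), is_bary p0 alpha ->
      inW W12 E n Y (p0 - 1) (fp phi p0 lam a alpha).
Proof.
  destruct (exists_gain_dominates C0 cg Hcg) as [p0 [Hp0 Hgain]].
  exists p0; split; [exact Hp0|].
  intros eps Heps lam Hlam a alpha Hbary.
  destruct (Hfact p0 eps Heps) as [Hlamp Hbound].
  destruct (Hbound lam Hlam a alpha Hbary) as [Hfar Hnear].
  assert (Hbubble : forall b, W12 (phi b lam) /\ (forall x, 0 < phi b lam x))
    by (intros b; apply Hphi; lra).
  assert (Hthreshold : INR (p0 - 1) + 1 = INR p0)
    by (rewrite minus_INR by exact Hp0; simpl; ring).
  unfold inW; rewrite Hthreshold; split; [|split].
  - apply fp_closed; auto; intros i _; apply Hbubble.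
  - apply fp_pos; [exact Hbary|]; intros i _; apply Hbubble.
  - destruct (classic (far_cond n c3 G nu0 eps lam p0 a alpha)) as [Hc|Hc].
    + exact (Hfar Hc).
    + eapply Rle_trans; [exact (Hnear Hc)|].
      apply correction_absorbed; [|left; apply Rpower_pos|exact Hgain].
      pose proof (Rpower_pos (INR p0) (2 / INR n)); nra.
Qed.
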